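(* Let $n\ge2$ and $Q\in SU_n$ with eigenvalues $\mu_1,\dots,\mu_n$ (with multiplicity), and let $\zeta(Q):=\frac1{2\pi}\sum_{j=1}^n\arg(\mu_j)\in\mathbb{Z}$. Let $W_Q:=\{(k_1,\dots,k_n)\in\mathbb{Z}^n:\sum_{j=1}^nk_j=-\zeta(Q)\}$ and $Z_Q:=\{\underline{k}=(k_1,\dots,k_n)\in W_Q:\max_jk_j-\min_jk_j\le1\}$. If $\zeta(Q)\ge0$, then every $\underline{k}\in Z_Q$ has exactly $\zeta(Q)$ entries equal to $-1$ and all remaining entries equal to $0$. In particular, if $\zeta(Q)=0$, then $Z_Q=\{(0,\dots,0)\}$.
   Context: $SU_n$ is the special unitary group and $\arg(z)\in(-\pi,\pi]$ the principal argument. *)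

From HB Require Import structures.
From mathcomp Require Import all_boot all_order all_algebra.
From mathcomp Require Import all_classical all_reals all_analysis.
From mathcomp Require Import complex.

Set Implicit Arguments.
Unset Strict Implicit.
Unset Printing Implicit Defensive.

Import Order.TTheory GRing.Theory Num.Theory.
Local Open Scope ring_scope.

(* Principal argument arg z in (-pi, pi] of a complex number z = a + i b
   (convention arg 0 = 0): with r = |z| = sqrt(a^2+b^2),
   arg z = acos(a/r) if b >= 0, and -acos(a/r) if b < 0. *)
Definition carg {R : realType} (z : R[i]) : R :=
  let a := complex.Re z in
  let b := complex.Im z in
  let r := Num.sqrt (a ^+ 2 + b ^+ 2) in
  if r == 0 then 0
  else if 0 <= b then acos (a / r) else - acos (a / r).

Definition adjmx {R : realType} {n : nat} (Q : 'M[R[i]]_n) : 'M[R[i]]_n :=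
  (map_mx (@conjc R) Q)^T.

Definition is_SU {R : realType} {n : nat} (Q : 'M[R[i]]_n) : Prop :=
  Q *m adjmx Q = 1%:M /\ \det Q = 1.

Definition eigenvalues_of {R : realType} {n : nat} (Q : 'M[R[i]]_n)
  (mu : 'I_n -> R[i]) : Prop :=
  char_poly Q = \prod_(j < n) ('X - (mu j)%:P).

Definition zeta {R : realType} {n : nat} (mu : 'I_n -> R[i]) : R :=
  (\sum_(j < n) carg (mu j)) / (2 * pi).

Definition in_W {R : realType} {n : nat} (z : R) (k : 'I_n -> int) : Prop :=
  (\sum_(j < n) k j)%:~R = - z.

Definition in_Z {R : realType} {n : nat} (z : R) (k : 'I_n -> int) : Prop :=
  in_W z k /\ forall i j : 'I_n, k i - k j <= 1.

From HB Require Import structures.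
From mathcomp Require Import all_boot all_order all_algebra.
From mathcomp Require Import all_classical all_reals all_analysis.
From mathcomp Require Import complex.
From mathcomp Require Import ring lra zify.

Set Implicit Arguments.
Unset Strict Implicit.
Unset Printing Implicit Defensive.

Import Order.TTheory GRing.Theory Num.Theory.
Local Open Scope ring_scope.

(* Only the size of zeta matters, not the unitarity of Q: every principal
   argument is at most pi, so 0 <= zeta(Q) <= n/2 < n.  An integer vector
   whose entries differ by at most 1 and whose sum -zeta(Q) lies in (-n, 0]
   can then only take the values -1 and 0: an entry >= 1 would force all
   entries >= 0 and a positive sum, an entry <= -2 all entries <= -1 and
   a sum <= -n.  The sum then counts the entries equal to -1. *)

(* No side condition: for a = b = 0 the quotient is a / 0 = 0. *)
Lemma normalized_coord_bound (R : rcfType) (a b : R) :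
  -1 <= a / Num.sqrt (a ^+ 2 + b ^+ 2) <= 1.
Proof.
set r := Num.sqrt _.
have [r0|r_neq0] := eqVneq r 0; first by rewrite r0 invr0 mulr0 lerN10 ler01.
have r_gt0 : 0 < r by rewrite lt_def r_neq0 sqrtr_ge0.
rewrite -ler_norml normrM normfV (gtr0_norm r_gt0) ler_pdivrMr // mul1r.
by rewrite -sqrtr_sqr ler_wsqrtr // lerDl sqr_ge0.
Qed.

Lemma carg_le_pi (R : realType) (z : R[i]) : carg z <= pi.
Proof.
rewrite /carg; case: ifP => _; first exact: pi_ge0.
have bound := @normalized_coord_bound R (complex.Re z) (complex.Im z).
case: ifP => _; first exact: acos_lepi.
by rewrite (le_trans _ (pi_ge0 R)) // oppr_le0 acos_ge0.
Qed.

Lemma zeta_le_half (R : realType) (n : nat) (mu : 'I_n -> R[i]) :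
  zeta mu <= n%:R / 2.
Proof.
rewrite /zeta ler_pdivrMr ?mulr_gt0 ?pi_gt0 //.
have -> : n%:R / 2 * (2 * pi) = \sum_(j < n) (pi : R).
  by rewrite sumr_const card_ord -mulr_natl; field.
by apply: ler_sum => j _; exact: carg_le_pi.
Qed.

Section SpreadAtMostOne.

Variables (I : finType) (k : I -> int).
Hypothesis k_spread : forall i j, k i - k j <= 1.

Lemma spread1_sum_le0 : \sum_i k i <= 0 -> forall j, k j <= 0.
Proof.
move=> sum_le0 j; rewrite leNgt; apply/negP => kj_gt0.
have k_ge0 i : 0 <= k i by have := k_spread j i; lia.
move: sum_le0; apply/negP; rewrite -ltNge (bigD1 j) //=.
by rewrite (lt_le_trans kj_gt0) // lerDl sumr_ge0.
Qed.

Lemma spread1_sum_gt_card : - #|I|%:Z < \sum_i k i -> forall j, -1 <= k j.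
Proof.
move=> sum_gt j; rewrite leNgt; apply/negP => kj_lt.
have k_le i : k i <= -1 by have := k_spread i j; lia.
have := lt_le_trans sum_gt (ler_sum _ (fun i _ => k_le i)).
by rewrite sumr_const mulNrn natz ltxx.
Qed.

End SpreadAtMostOne.

Lemma sum_m10_card (I : finType) (k : I -> int) :
  (forall j, k j = -1 \/ k j = 0) ->
  \sum_j k j = - #|[set j | k j == -1]|%:Z.
Proof.
move=> k_m10.
rewrite (eq_bigr (fun j => if k j == -1 then -1 else 0)); last first.
  by move=> j _; case: (k_m10 j) => ->.
by rewrite -big_mkcond sumr_const cardsE mulNrn natz.
Qed.

Lemma in_Z_m10 (R : realType) (n : nat) (z : R) (k : 'I_n -> int) :
  0 <= z -> z < n%:R -> in_Z z k -> forall j, k j = -1 \/ k j = 0.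
Proof.
move=> z_ge0 z_lt_n [sum_k k_spread] j.
have sum_le0 : \sum_i k i <= 0 by rewrite -(ler_int R) sum_k oppr_le0.
have sum_gt : - #|'I_n|%:Z < \sum_i k i.
  by rewrite -(ltr_int R) sum_k card_ord rmorphN ltrN2.
have := spread1_sum_le0 k_spread sum_le0 j.
have := spread1_sum_gt_card k_spread sum_gt j.
lia.
Qed.

Theorem lemma2p7 (R : realType) (n : nat) (Q : 'M[R[i]]_n)
  (mu : 'I_n -> R[i]) :
  (2 <= n)%N -> is_SU Q -> eigenvalues_of Q mu ->
  0 <= zeta mu ->
  (forall k : 'I_n -> int, in_Z (zeta mu) k ->
     (#|[set j | k j == -1]|)%:R = zeta mu /\
     (forall j, k j != -1 -> k j = 0))
  /\ (zeta mu = 0 ->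
     forall k : 'I_n -> int, in_Z (zeta mu) k <-> k = (fun _ => 0)).
Proof.
move=> n_ge2 _ _ zeta_ge0.
have zeta_lt_n : zeta mu < n%:R.
  apply: (le_lt_trans (zeta_le_half mu)).
  have : (2 : R) <= n%:R by rewrite ler_nat.
  lra.
have count_m1 (k : 'I_n -> int) : in_Z (zeta mu) k ->
    (#|[set j | k j == -1]|)%:R = zeta mu /\ (forall j, k j != -1 -> k j = 0).
  move=> kZ; have k_m10 := in_Z_m10 zeta_ge0 zeta_lt_n kZ.
  split; last by move=> j; case: (k_m10 j) => ->; rewrite ?eqxx.
  apply: oppr_inj; case: kZ => <- _.
  by rewrite sum_m10_card // rmorphN /= pmulrn.
split=> // zeta0 k; split => [kZ|->]; last first.
  by split=> [|i j]; rewrite /in_W ?big1 ?zeta0 ?oppr0 ?subrr.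
have [card_m1 k_0] := count_m1 k kZ.
apply: funext => j; apply: k_0; apply/eqP => kj.
have : (0 < #|[set j | k j == -1%R]|)%N.
  by apply/card_gt0P; exists j; rewrite inE kj eqxx.
by rewrite -(ltr0n R) card_m1 zeta0 ltxx.
Qed.
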